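(* Fix a constant $\Delta\ge 1$. There exists a canonical routing labeling scheme for the family of rooted trees on $n$ nodes in which every node has at most $\Delta$ children, such that every label has length $\log n+\mathcal{O}(\log\log n)$ bits. The constant in the $\mathcal{O}(\cdot)$ may depend on $\Delta$.
   Context: All logarithms are base $2$. A (designer-port) routing labeling scheme for a family $\mathcal{T}$ of rooted trees consists of an encoder and a decoder. - The encoder is given $T\in\mathcal{T}$. It assigns a binary string (label) $\ell(u)$ to every node $u$. It also labels the edges from each node $u$ to its $\deg(u)$ children with distinct port numbers from $\{1,\dots,\deg(u)\}$; the encoder is free to choose these port numbers. - The decoder receives only $\ell(u)$ and $\ell(w)$ for nodes $u\neq w$ of some $T\in\mathcal{T}$; the value $\lceil\log n\rceil$, where $n=|T|$, may also be assumed known. It must return $0$ if the next node on the path from $u$ to $w$ is the parent of $u$. Otherwise it must return the port number of the first edge on that path. - The length of the scheme is the maximum label length over all trees in $\mathcal{T}$ and all their nodes. A port assignment is canonical if, for every node $v$ with children $v_1,\dots,v_i$ ordered so that $|T_{v_1}|\ge\dots\ge|T_{v_i}|$, the edge from $v$ to $v_j$ gets port $j$. Here $T_v$ denotes the subtree rooted at $v$; ties may be broken arbitrarily. A scheme is canonical if its encoder always produces a canonical port assignment. *)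

From mathcomp Require Import all_boot.
Set Implicit Arguments. Unset Strict Implicit. Unset Printing Implicit Defensive.

Definition is_rooted_tree (n : nat) (par : 'I_n -> 'I_n) (r : 'I_n) : Prop :=
  par r = r /\ forall u : 'I_n, exists k : nat, iter k par u = r.

(* [anc par v u]: v lies on the path from u to the root (v = u allowed),
   i.e. u belongs to the subtree T_v.  In a tree on n nodes such paths have
   fewer than n edges, so k ranges over 'I_n. *)
Definition anc (n : nat) (par : 'I_n -> 'I_n) (v u : 'I_n) : bool :=
  [exists k : 'I_n, iter k par u == v].

Definition subtree (n : nat) (par : 'I_n -> 'I_n) (v : 'I_n) : {set 'I_n} :=
  [set u | anc par v u].

Definition children (n : nat) (par : 'I_n -> 'I_n) (r v : 'I_n) : {set 'I_n} :=
  [set u | (u != r) && (par u == v)].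

(* Port assignment: [port u] is the port number of the edge from [par u] to
   the child [u] (for u <> r). *)
Definition canonical_ports (n : nat) (par : 'I_n -> 'I_n) (r : 'I_n)
    (port : 'I_n -> nat) : Prop :=
  forall v : 'I_n, exists s : seq 'I_n,
    [/\ perm_eq s (enum (children par r v)),
        sorted (fun a b => #|subtree par b| <= #|subtree par a|) s
      & forall j : nat, j < size s -> port (nth v s j) = j.+1].

(* Correctness of the decoder on a given labeled tree: for u <> w it returns 0
   if the next node on the path from u to w is the parent of u (i.e. w is not
   in T_u), and otherwise the port of the edge from u to the child c of u
   whose subtree contains w. *)
Definition decoder_correct (n : nat) (par : 'I_n -> 'I_n) (r : 'I_n)
    (lab : 'I_n -> seq bool) (port : 'I_n -> nat)
    (dec : nat -> seq bool -> seq bool -> nat) : Prop :=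
  forall u w : 'I_n, u != w ->
    (~~ anc par u w -> dec (up_log 2 n) (lab u) (lab w) = 0) /\
    (forall c : 'I_n, c \in children par r u -> anc par c w ->
        dec (up_log 2 n) (lab u) (lab w) = port c).

From mathcomp Require Import all_boot zify.
Set Implicit Arguments. Unset Strict Implicit. Unset Printing Implicit Defensive.

(* Interval routing.  Every node u gets an interval [lo u, hi u) such that w
   lies in T_u iff lo u <= lo w < hi u; the intervals of the children of u are
   disjoint and lie in (lo u, hi u).  Children are sorted by subtree size,
   which is the canonical port order; the light children (all but the first)
   get consecutive blocks right after lo u, and the heavy child keeps the
   rest of the interval.  The label of u holds lo u, hi u and the blocks of
   its light children, so the decoder returns the port of the block
   containing lo w, port 1 if lo w lies in the rest, and 0 outside.

   A block of size m ends at a multiple of 2 ^ (log m - k), so its end is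
   given relative to its start by k + O(1) bits.  The rounding costs a factor
   1 + 2 ^ -k per light edge, and a root path has at most log n light edges,
   so for 2 ^ k >= 2 log n all positions stay below 4 n and fit in
   log n + 2 bits; with k = O(log log n) each of the at most Delta - 1 light
   children costs O(log log n) bits. *)

Definition roundup (p y : nat) : nat := (y + p.-1) %/ p * p.

Section Roundup.
Variables p y : nat.
Hypothesis p_gt0 : 0 < p.

Lemma roundup_spec : [/\ y <= roundup p y, roundup p y < y + p & p %| roundup p y].
Proof.
rewrite /roundup dvdn_mull //; have := divn_eq (y + p.-1) p.
have := ltn_pmod (y + p.-1) p_gt0; set q := _ %/ _; set rm := _ %% _.
by move=> h1 h2; split; lia.
Qed.

Lemma leq_roundup : y <= roundup p y. Proof. by case: roundup_spec. Qed.
Lemma roundup_lt : roundup p y < y + p. Proof. by case: roundup_spec. Qed.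
Lemma dvdn_roundup : p %| roundup p y. Proof. by case: roundup_spec. Qed.

End Roundup.

Lemma divn_subn_le p x y : 0 < p -> x <= y -> y %/ p - x %/ p <= (y - x) %/ p + 1.
Proof.
move=> p_gt0 le_xy.
have := divn_eq y p; have := divn_eq x p; have := divn_eq (y - x) p.
have := ltn_pmod y p_gt0; have := ltn_pmod x p_gt0; have := ltn_pmod (y - x) p_gt0.
set a := y %/ p; set b := x %/ p; set c := (y - x) %/ p.
set a' := y %% p; set b' := x %% p; set c' := (y - x) %% p.
move=> h1 h2 h3 h4 h5 h6.
have : a * p <= (b + c + 1) * p + p.-1 by lia.
nia.
Qed.

Section Blocks.
Variable k : nat.

Definition grain (m : nat) : nat := trunc_log 2 m - k.
Definition block_end (x m : nat) : nat := roundup (2 ^ grain m) (x + m).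
Definition block_room (m : nat) : nat := m + (2 ^ grain m).-1.

Lemma expn_grain_gt0 m : 0 < 2 ^ grain m.
Proof. by rewrite expn_gt0. Qed.

Lemma leq_block_end x m : x + m <= block_end x m.
Proof. exact/leq_roundup/expn_grain_gt0. Qed.

Lemma block_end_lt x m : block_end x m < x + m + 2 ^ grain m.
Proof. exact/roundup_lt/expn_grain_gt0. Qed.

Lemma dvdn_block_end x m : 2 ^ grain m %| block_end x m.
Proof. exact/dvdn_roundup/expn_grain_gt0. Qed.

Lemma block_end_subn x m : block_end x m - x <= block_room m.
Proof. have := block_end_lt x m; have := expn_grain_gt0 m; rewrite /block_room; lia. Qed.

Lemma grain_cases m : 0 < m -> grain m = 0 \/ 2 ^ grain m * 2 ^ k <= m.
Proof.
move=> m_gt0; rewrite /grain; case: (leqP (trunc_log 2 m) k) => h.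
  by left; apply/eqP; rewrite subn_eq0.
right; rewrite -expnD subnK; last exact: ltnW.
exact: trunc_logP.
Qed.

Lemma expn_grain_le m : 0 < m -> 2 ^ grain m <= m.
Proof.
move=> m_gt0; case: (grain_cases m_gt0) => [->|h] //.
by apply: leq_trans h; rewrite leq_pmulr // expn_gt0.
Qed.

Lemma block_room_le m : 0 < m -> block_room m * 2 ^ k <= m * (2 ^ k + 1).
Proof.
move=> m_gt0; have hK : 0 < 2 ^ k by rewrite expn_gt0.
rewrite /block_room; case: (grain_cases m_gt0) => [->|h]; first by rewrite expn0 /=; nia.
move: h; have := expn_grain_gt0 m; set p := 2 ^ grain m; set K := 2 ^ k.
nia.
Qed.

Lemma block_end_quot_lt x m : 0 < m ->
  block_end x m %/ 2 ^ grain m - x %/ 2 ^ grain m < 2 ^ k.+2.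
Proof.
move=> m_gt0; set p := 2 ^ grain m.
have p_gt0 : 0 < p := expn_grain_gt0 m.
have h1 := block_end_lt x m; have h2 := leq_block_end x m.
apply: leq_ltn_trans (divn_subn_le p_gt0 (leq_trans (leq_addr _ _) h2)) _.
have hm2 : m < p * 2 ^ k.+1.
  apply: (leq_trans (trunc_log_ltn m (ltnSn 1))).
  rewrite -expnD leq_exp2l // /p /grain; lia.
have : (block_end x m - x) %/ p < 2 ^ k.+1 + 1.
  rewrite ltn_divLR //; rewrite -/p in h1; nia.
have : 2 ^ k.+1 + 1 < 2 ^ k.+2.
  rewrite !expnS; have : 0 < 2 ^ k by rewrite expn_gt0. lia.
lia.
Qed.

End Blocks.

Fixpoint bits_of (w x : nat) : seq bool :=
  if w is w'.+1 then odd x :: bits_of w' x./2 else [::].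

Fixpoint nat_of_bits (s : seq bool) : nat :=
  if s is b :: s' then b + (nat_of_bits s').*2 else 0.

Lemma size_bits_of w x : size (bits_of w x) = w.
Proof. by elim: w x => //= w IH x; rewrite IH. Qed.

Lemma bits_ofK w x : x < 2 ^ w -> nat_of_bits (bits_of w x) = x.
Proof.
elim: w x => [|w IH] x /=; first by rewrite expn0; case: x.
move=> hx; have hd := odd_double_half x.
rewrite IH; first by rewrite -[in RHS]hd.
move: hx hd; rewrite expnS -!muln2; set h := x./2; set o := odd x; set p := 2 ^ w.
case: o => /=; lia.
Qed.

Definition shift_up (x : nat) (et : nat * nat) : nat := (x %/ 2 ^ et.1 + et.2) * 2 ^ et.1.

Definition end_code (x y e : nat) : nat * nat := (e, y %/ 2 ^ e - x %/ 2 ^ e).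

Lemma end_codeK x y e : 2 ^ e %| y -> x <= y -> shift_up x (end_code x y e) = y.
Proof. by move=> dvd_y le_xy; rewrite /shift_up /= subnKC ?divnK // leq_div2r. Qed.

Fixpoint intervals (x : nat) (ps : seq (nat * nat)) : seq (nat * nat) :=
  if ps is p :: ps' then (x, shift_up x p) :: intervals (shift_up x p) ps' else [::].

Fixpoint intervals_end (x : nat) (ps : seq (nat * nat)) : nat :=
  if ps is p :: ps' then intervals_end (shift_up x p) ps' else x.

(* [a] and [shift_up a et] are the ends of the interval of a node, [ps]
   codes the blocks of its light children and [aw] is the start of the
   interval of the target. *)
Definition route (a : nat) (et : nat * nat) (ps : seq (nat * nat)) (aw : nat) : nat :=
  let ivs := intervals a.+1 ps in
  let i := find (fun iv : nat * nat => iv.1 <= aw < iv.2) ivs in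
  if i < size ivs then i.+2
  else if intervals_end a.+1 ps <= aw < shift_up a et then 1 else 0.

Lemma size_intervals x ps : size (intervals x ps) = size ps.
Proof. by elim: ps x => //= p ps IH x; rewrite IH. Qed.

Section Route.
Variables (a : nat) (et : nat * nat) (ps : seq (nat * nat)) (aw : nat).
Notation ivs := (intervals a.+1 ps).
Notation inside := (fun iv : nat * nat => iv.1 <= aw < iv.2).

Lemma route_light i : i < size ps -> inside (nth (0, 0) ivs i) ->
  (forall j, j < i -> ~~ inside (nth (0, 0) ivs j)) -> route a et ps aw = i.+2.
Proof.
move=> lt_i in_i out_j; rewrite /route size_intervals.
have has_i : has inside ivs by apply/(has_nthP (0, 0)); exists i; rewrite ?size_intervals.
suff -> : find inside ivs = i by rewrite lt_i.
case: (ltngtP (find inside ivs) i) => // lt_find.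
- by case/negP: (out_j _ lt_find); exact: (nth_find (0, 0) has_i).
- by move: (before_find (0, 0) lt_find) => /=; rewrite in_i.
Qed.

Lemma route_heavy : (forall j, j < size ps -> ~~ inside (nth (0, 0) ivs j)) ->
  route a et ps aw = if intervals_end a.+1 ps <= aw < shift_up a et then 1 else 0.
Proof.
move=> out_j; rewrite /route.
have -> : find inside ivs = size ivs.
  apply: hasNfind; apply/(has_nthP (0, 0)) => -[j]; rewrite size_intervals => /out_j.
  by move/negbTE=> ->.
by rewrite ltnn.
Qed.

End Route.

Section Encoding.
Variables W F : nat.

Definition encode (a : nat) (et : nat * nat) (ps : seq (nat * nat)) : seq bool :=
  bits_of W a ++ bits_of F et.1 ++ bits_of F et.2 ++
  flatten [seq bits_of F p.1 ++ bits_of F p.2 | p <- ps].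

Definition decode (su sw : seq bool) : nat :=
  let npairs := (size su - (W + F + F)) %/ (F + F) in
  let chunks := reshape (nseq npairs (F + F)) (drop (W + F + F) su) in
  route (nat_of_bits (take W su))
    (nat_of_bits (take F (drop W su)), nat_of_bits (take F (drop (W + F) su)))
    [seq (nat_of_bits (take F ch), nat_of_bits (drop F ch)) | ch <- chunks]
    (nat_of_bits (take W sw)).

Lemma shape_pair_bits (ps : seq (nat * nat)) :
  shape [seq bits_of F p.1 ++ bits_of F p.2 | p <- ps] = nseq (size ps) (F + F).
Proof. by elim: ps => //= p ps ->; rewrite size_cat !size_bits_of. Qed.

Lemma size_encode a et ps : size (encode a et ps) = W + F + F + (F + F) * size ps.
Proof.
rewrite /encode !size_cat !size_bits_of size_flatten shape_pair_bits sumn_nseq; lia.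
Qed.

Lemma encode_fields a et ps (s := encode a et ps) :
  [/\ take W s = bits_of W a, take F (drop W s) = bits_of F et.1,
      take F (drop (W + F) s) = bits_of F et.2 &
      drop (W + F + F) s = flatten [seq bits_of F p.1 ++ bits_of F p.2 | p <- ps]].
Proof.
have sa : size (bits_of W a) = W by rewrite size_bits_of.
have se : size (bits_of F et.1) = F by rewrite size_bits_of.
have st : size (bits_of F et.2) = F by rewrite size_bits_of.
rewrite /s /encode; split.
- by rewrite take_size_cat.
- by rewrite drop_size_cat // take_size_cat.
- by rewrite addnC -drop_drop !drop_size_cat // take_size_cat.
- by rewrite -addnA addnC -!drop_drop !drop_size_cat.
Qed.

Lemma decode_encode a et ps sw : 0 < F -> a < 2 ^ W -> et.1 < 2 ^ F -> et.2 < 2 ^ F ->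
  all (fun p => (p.1 < 2 ^ F) && (p.2 < 2 ^ F)) ps ->
  decode (encode a et ps) sw = route a et ps (nat_of_bits (take W sw)).
Proof.
move=> F_gt0 ha; case: et => e t /= he ht hps; rewrite /decode size_encode.
have [-> -> -> ->] := encode_fields a (e, t) ps; rewrite !bits_ofK //.
have -> : (W + F + F + (F + F) * size ps - (W + F + F)) %/ (F + F) = size ps.
  by rewrite addKn mulKn // addn_gt0 F_gt0.
rewrite -shape_pair_bits flattenK -map_comp -[in RHS](map_id ps).
congr route; apply/eq_in_map => -[x y] /(allP hps) /andP [hx hy] /=.
by rewrite take_size_cat ?size_bits_of // drop_size_cat ?size_bits_of // !bits_ofK.
Qed.

End Encoding.

Lemma room_scale_le B s d z jc ju : 0 < B ->
  s * B <= d * (B + 1) -> d * B <= z * (B + jc.*2) -> jc < ju -> jc.*2 <= B ->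
  s * B <= z * (B + ju.*2).
Proof.
move=> B_gt0 hs hd lt_j le_jB; rewrite -(leq_pmul2r B_gt0).
have h1 : s * B * B <= z * (B + jc.*2) * (B + 1).
  by apply: leq_trans (leq_mul hs (leqnn B)) _; rewrite mulnAC leq_mul2r hd orbT.
apply: leq_trans h1 _; rewrite mulnAC -!mulnA leq_mul2l; apply/orP; right.
rewrite -!addnn in lt_j le_jB *; nia.
Qed.

Record place := Place { pl_lo : nat; pl_hi : nat; pl_exp : nat }.

Section Tree.
Variables (n : nat) (par : 'I_n -> 'I_n) (r : 'I_n).
Hypothesis par_root : par r = r.
Hypothesis reach_root : forall u, exists k, iter k par u = r.

Lemma iter_par_root k : iter k par r = r.
Proof. exact: iter_fix. Qed.

Lemma exists_depth u : exists2 d, d < n & iter d par u = r.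
Proof.
have ex_d : exists d, iter d par u == r by case: (reach_root u) => d /eqP; exists d.
case: (ex_minnP ex_d) => d /eqP hd d_min; exists d => //.
pose f (i : 'I_d.+1) := iter i par u.
suff /leq_card : injective f by rewrite !card_ord.
move=> i j hij; apply/val_inj/eqP.
wlog le_ij : i j hij / i <= j.
  move=> H; case: (leqP i j) => [|/ltnW] le; first exact: H.
  by rewrite eq_sym; exact: H (esym hij) le.
rewrite eqn_leq le_ij /= leqNgt; apply/negP => lt_ij.
have le_jd : j <= d by rewrite -ltnS.
have : iter (d - j + i) par u == r by rewrite /f in hij; rewrite iterD hij -iterD subnK // hd.
by move/d_min; lia.
Qed.

Lemma iter_n_root u : iter n par u = r.
Proof.
case: (exists_depth u) => d /ltnW le_dn hd.
by rewrite -[X in iter X _ _](subnK le_dn) iterD hd iter_par_root.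
Qed.

Lemma ancP v u : reflect (exists k, iter k par u = v) (anc par v u).
Proof.
apply: (iffP existsP) => [[k /eqP e]|[k e]]; first by exists k.
case: (exists_depth u) => d lt_dn hd.
case: (leqP k d) => le_kd.
  by exists (Ordinal (leq_ltn_trans le_kd lt_dn)); rewrite /= e.
exists (Ordinal lt_dn); rewrite /= hd -e -(subnK (ltnW le_kd)) iterD hd.
by rewrite iter_par_root.
Qed.

Lemma anc_refl u : anc par u u.
Proof. by apply/ancP; exists 0. Qed.

Lemma anc_root u : anc par r u.
Proof. by case: (reach_root u) => k e; apply/ancP; exists k. Qed.

Lemma anc_trans a b c : anc par a b -> anc par b c -> anc par a c.
Proof. by case/ancP=> i ei /ancP [j ej]; apply/ancP; exists (i + j); rewrite iterD ej. Qed.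

Lemma iter_fixed_root x m : 0 < m -> iter m par x = x -> x = r.
Proof.
move=> m_gt0 e; case: (reach_root x) => k ek.
have iter_mul j : iter (m * j) par x = x.
  by elim: j => [|j IH]; rewrite ?muln0 // mulnS iterD IH e.
by rewrite -(iter_mul k) -(subnK (leq_pmull k m_gt0)) iterD ek iter_par_root.
Qed.

Lemma anc_parent c u : c \in children par r u -> anc par u c.
Proof. by rewrite inE => /andP [_ /eqP e]; apply/ancP; exists 1. Qed.

Lemma anc_childN c u : c \in children par r u -> ~~ anc par c u.
Proof.
rewrite inE => /andP [cr /eqP e]; apply/negP => /ancP [k ek].
have : iter k.+1 par c = c by rewrite iterSr e.
by move/(iter_fixed_root (ltn0Sn k)) => cr'; rewrite cr' eqxx in cr.
Qed.

Lemma anc_exists_child u w : anc par u w -> u != w ->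
  exists2 c, c \in children par r u & anc par c w.
Proof.
move=> /ancP ex_k uw; have ex_k' : exists k, iter k par w == u.
  by case: ex_k => k /eqP; exists k.
case: (ex_minnP ex_k') => -[|k] /eqP hk k_min; first by rewrite -hk eqxx in uw.
exists (iter k par w); last by apply/ancP; exists k.
rewrite inE -iterS hk eqxx andbT; apply/negP => /eqP e.
have /k_min : iter k par w == u by rewrite -hk iterS e par_root.
by rewrite ltnn.
Qed.

Lemma children_anc_eq u c c' w : c \in children par r u -> c' \in children par r u ->
  anc par c w -> anc par c' w -> c = c'.
Proof.
move=> hc hc' /ancP [i ei] /ancP [j ej].
wlog le_ij : i j c c' hc hc' ei ej / i <= j.
  move=> H; case: (leqP i j) => [|/ltnW] le; first exact: (H i j).
  by symmetry; exact: (H j i _ _ _ _ _ _ le).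
case: (ltngtP i j) le_ij => [lt_ij _|//|eq_ij _]; last by move: ei ej; rewrite eq_ij => <- <-.
move: hc hc'; rewrite !inE => /andP [cr /eqP pc] /andP [cr' /eqP pc'].
have ec : iter (j - i) par c = c' by rewrite -ei -iterD subnK // ltnW.
have d_gt0 : 0 < j - i by rewrite subn_gt0.
have /(iter_fixed_root d_gt0) ur : iter (j - i) par u = u.
  by rewrite -{1}pc -iterSr iterS ec pc'.
move: ec; rewrite -(prednK d_gt0) iterSr pc ur iter_par_root => ec.
by rewrite ec eqxx in cr'.
Qed.

Definition tsize (v : 'I_n) : nat := #|subtree par v|.
Definition tsize_ge : rel 'I_n := fun a b => tsize b <= tsize a.

(* Children by non-increasing subtree size; the head is the heavy child. *)
Definition sorted_children (v : 'I_n) : seq 'I_n := sort tsize_ge (enum (children par r v)).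
Definition port (c : 'I_n) : nat := (index c (sorted_children (par c))).+1.

Lemma tsize_ge_total : total tsize_ge.
Proof. by move=> a b; rewrite /tsize_ge leq_total. Qed.

Lemma tsize_ge_trans : transitive tsize_ge.
Proof. by move=> a b c; rewrite /tsize_ge => h1 h2; apply: leq_trans h2 h1. Qed.

Lemma sorted_children_uniq v : uniq (sorted_children v).
Proof. by rewrite sort_uniq enum_uniq. Qed.

Lemma mem_sorted_children v c : (c \in sorted_children v) = (c \in children par r v).
Proof. by rewrite mem_sort mem_enum. Qed.

Lemma size_sorted_children v : size (sorted_children v) = #|children par r v|.
Proof. by rewrite size_sort -cardE. Qed.

Lemma canonical_port : canonical_ports par r port.
Proof.
move=> v; exists (sorted_children v); split.
- exact: permEl (perm_sort _ _).
- exact: sort_sorted tsize_ge_total _.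
move=> j hj; rewrite /port.
have : nth v (sorted_children v) j \in children par r v by rewrite -mem_sorted_children mem_nth.
by rewrite inE => /andP [_ /eqP ->]; rewrite index_uniq // sorted_children_uniq.
Qed.

Lemma tsize_gt0 v : 0 < tsize v.
Proof. by apply/card_gt0P; exists v; rewrite inE anc_refl. Qed.

Lemma tsize_le v : tsize v <= n.
Proof. by have := max_card (subtree par v); rewrite card_ord. Qed.

Lemma tsize_child_lt c u : c \in children par r u -> tsize c < tsize u.
Proof.
move=> hc; apply: proper_card; apply/properP; split.
  by apply/subsetP => w; rewrite !inE; apply: anc_trans (anc_parent hc).
by exists u; rewrite !inE ?anc_refl // (negbTE (anc_childN hc)).
Qed.

(* The subtrees of the children of [u] are disjoint and miss [u]. *)
Lemma sum_tsize_children u : \sum_(c <- sorted_children u) tsize c < tsize u.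
Proof.
rewrite (perm_big _ (permEl (perm_sort _ _))) big_enum /= /tsize.
under eq_bigr => c _ do rewrite -sum1_card big_mkcond /=.
rewrite exchange_big /= -sum1_card [X in _ < X]big_mkcond /=.
rewrite (bigD1 u) //= big1 => [|c hc]; last by rewrite inE (negbTE (anc_childN hc)).
rewrite [X in _ < X](bigD1 u) //= inE anc_refl add0n add1n ltnS.
apply: leq_sum => w _; rewrite inE.
have [uw|nuw] := boolP (anc par u w); last first.
  rewrite big1 // => c hc; rewrite inE; case: ifP => // hcw.
  by case/negP: nuw; exact: anc_trans (anc_parent hc) hcw.
case: (eqVneq u w) => [<- | u_neq_w].
  by rewrite big1 // => c hc; rewrite inE (negbTE (anc_childN hc)).
case: (anc_exists_child uw u_neq_w) => c0 hc0 hc0w.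
rewrite (bigD1 c0) //= inE hc0w big1 // => c /andP [hc neq_c_c0].
by rewrite inE; case: ifP => // hcw; rewrite (children_anc_eq hc hc0 hcw hc0w) eqxx in neq_c_c0.
Qed.

Lemma light_child_tsize u h ls c : sorted_children u = h :: ls -> c \in ls ->
  (tsize c).*2 < tsize u.
Proof.
move=> e hc; have := sum_tsize_children u; rewrite e big_cons.
have uniq_ls : uniq ls by have := sorted_children_uniq u; rewrite e => /andP [].
rewrite (bigD1_seq c hc uniq_ls) /=.
have : tsize_ge h c.
  have := sort_sorted tsize_ge_total (enum (children par r u)).
  rewrite -/(sorted_children u) e /=.
  by move/(order_path_min tsize_ge_trans)/allP/(_ c hc).
rewrite /tsize_ge -addnn; lia.
Qed.

Variable k : nat.

Fixpoint needf (f : nat) (u : 'I_n) : nat :=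
  if f is f'.+1 then
    match sorted_children u with
    | [::] => 1
    | h :: ls => 1 + \sum_(c <- ls) block_room k (needf f' c) + needf f' h
    end
  else 0.

(* The length of the interval reserved for [T_u]; the fuel [n] exceeds the
   height of the tree. *)
Definition need (u : 'I_n) : nat := needf n u.

Lemma needf_stable f g u : tsize u <= f -> tsize u <= g -> needf f u = needf g u.
Proof.
elim: f g u => [|f IH] [|g] u hf hg; try by have := tsize_gt0 u; lia.
rewrite /=; case e: (sorted_children u) => [|h ls] //.
have hc c : c \in sorted_children u -> needf f c = needf g c.
  by rewrite mem_sorted_children => /tsize_child_lt lt_cu; apply: IH; lia.
rewrite hc ?e ?mem_head //; congr (_ + _ + _); apply: eq_big_seq => c c_ls.
by rewrite hc // e inE c_ls orbT.
Qed.

Lemma needE u : need u =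
  match sorted_children u with
  | [::] => 1
  | h :: ls => 1 + \sum_(c <- ls) block_room k (need c) + need h
  end.
Proof.
have n_gt0 : 0 < n by have := tsize_gt0 u; have := tsize_le u; lia.
rewrite /need -[X in needf X u](prednK n_gt0) /=.
case e: (sorted_children u) => [|h ls] //.
have hc c : c \in sorted_children u -> needf n.-1 c = needf n c.
  rewrite mem_sorted_children => /tsize_child_lt lt_cu.
  by have le_un := tsize_le u; have le_cn := tsize_le c; apply: needf_stable; lia.
rewrite hc ?e ?mem_head //; congr (_ + _ + _); apply: eq_big_seq => c c_ls.
by rewrite hc // e inE c_ls orbT.
Qed.

Lemma need_gt0 u : 0 < need u.
Proof. by rewrite needE; case: (sorted_children u) => // h ls; rewrite -addnA. Qed.

Hypothesis two_log_le : (trunc_log 2 n).*2 <= 2 ^ k.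

(* Every light edge halves the subtree size and loses a factor [1 + 2 ^ -k]
   in the rounding, so a subtree of size [s] needs at most
   [s (1 + 2 log s / 2 ^ k)] positions. *)
Lemma need_bound u : need u * 2 ^ k <= tsize u * (2 ^ k + (trunc_log 2 (tsize u)).*2).
Proof.
have [N] := ubnP (tsize u); elim: N u => // N IH u /ltnSE le_uN.
set B := 2 ^ k; have B_gt0 : 0 < B by rewrite expn_gt0.
set X := B + (trunc_log 2 (tsize u)).*2; rewrite needE.
case e: (sorted_children u) => [|h ls]; first by have := tsize_gt0 u; rewrite /X; nia.
have hsum := sum_tsize_children u; rewrite e big_cons in hsum.
have child c : c \in sorted_children u -> tsize c < tsize u.
  by rewrite mem_sorted_children; apply: tsize_child_lt.
have heavy : need h * B <= tsize h * X.
  have lt_hu : tsize h < tsize u by apply: child; rewrite e mem_head.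
  apply: leq_trans (IH h (leq_trans lt_hu le_uN)) _; rewrite leq_mul2l leq_add2l leq_double.
  by rewrite leq_trunc_log ?orbT // ltnW.
have light c : c \in ls -> block_room k (need c) * B <= tsize c * X.
  move=> c_ls; apply: room_scale_le B_gt0 (block_room_le k (need_gt0 c)) (IH c _) _ _.
  - by apply: leq_trans le_uN; apply: child; rewrite e inE c_ls orbT.
  - by rewrite -trunc_log2_double ?tsize_gt0 // leq_trunc_log // ltnW // (light_child_tsize e).
  - by apply: leq_trans two_log_le; rewrite leq_double leq_trunc_log ?tsize_le.
have hls : \sum_(c <- ls) block_room k (need c) * B <= (\sum_(c <- ls) tsize c) * X.
  by rewrite big_distrl /= !big_seq; apply: leq_sum.
rewrite -big_distrl /= in hls; rewrite !mulnDl.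
have le_BX : B <= X by rewrite leq_addr.
nia.
Qed.

Definition lay_end (x : nat) (l : seq 'I_n) : nat := foldl (fun y c => block_end k y (need c)) x l.

Lemma lay_end_ge x l : x <= lay_end x l.
Proof.
elim: l x => //= c l IH x; apply: leq_trans (IH _).
exact: leq_trans (leq_addr _ _) (leq_block_end _ _ _).
Qed.

Lemma lay_end_le x l : lay_end x l <= x + \sum_(c <- l) block_room k (need c).
Proof.
elim: l x => [|c l IH] x /=; first by rewrite big_nil addn0.
rewrite big_cons; apply: leq_trans (IH _) _.
have := block_end_subn k x (need c); have := leq_block_end k x (need c); lia.
Qed.

Lemma lay_end_take_mono x l i j : i <= j -> lay_end x (take i l) <= lay_end x (take j l).
Proof.
by move=> le_ij; rewrite -[take j l](cat_take_drop i) /lay_end foldl_cat take_takel // lay_end_ge.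
Qed.

Lemma lay_end_take_le x l i : lay_end x (take i l) <= lay_end x l.
Proof. by rewrite -[in X in _ <= X](cat_take_drop i l) /lay_end foldl_cat lay_end_ge. Qed.

Lemma lay_end_takeS x l i : i < size l ->
  lay_end x (take i.+1 l) = block_end k (lay_end x (take i l)) (need (nth r l i)).
Proof. by move=> lt_il; rewrite (take_nth r lt_il) /lay_end foldl_rcons. Qed.

Definition root_end : nat := block_end k 0 (need r).
Definition root_place : place := Place 0 root_end (grain k (need r)).

Definition child_place (p : place) (v c : 'I_n) : place :=
  match sorted_children v with
  | [::] => p
  | h :: ls =>
      let x := (pl_lo p).+1 in
      if c == h then Place (lay_end x ls) (pl_hi p) (pl_exp p)
      else let i := index c ls in
           Place (lay_end x (take i ls)) (lay_end x (take i.+1 ls)) (grain k (need c))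
  end.

(* The label of a node with place [p] stores [pl_hi p] as
   [shift_up (pl_lo p) (pl_exp p, t)], with [pl_exp p] and [t] of [k + 2]
   bits, and all positions stay below [root_end]. *)
Definition fits (p : place) (m : nat) : Prop :=
  [/\ pl_lo p + m <= pl_hi p, 2 ^ pl_exp p %| pl_hi p,
      pl_hi p %/ 2 ^ pl_exp p - pl_lo p %/ 2 ^ pl_exp p < 2 ^ k.+2,
      2 ^ pl_exp p <= pl_hi p & pl_hi p <= root_end].

Lemma fits_root : fits root_place (need r).
Proof.
have need_r_gt0 := need_gt0 r; rewrite /fits /root_place /root_end /=; split => //.
- exact: leq_block_end.
- exact: dvdn_block_end.
- by have := block_end_quot_lt k 0 need_r_gt0; rewrite div0n.
- exact: leq_trans (expn_grain_le k need_r_gt0) (leq_trans (leq_addl _ _) (leq_block_end _ _ _)).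
Qed.

Lemma sorted_children_cons v c : c \in children par r v ->
  exists h ls, sorted_children v = h :: ls /\ (c = h \/ c \in ls /\ c != h).
Proof.
rewrite -mem_sorted_children; case e: (sorted_children v) => [|h ls] // hc.
exists h, ls; split => //; case: (eqVneq c h) => [|c_neq_h]; [by left | right].
by move: hc; rewrite inE (negbTE c_neq_h).
Qed.

Lemma heavy_room p v h ls : sorted_children v = h :: ls -> fits p (need v) ->
  lay_end (pl_lo p).+1 ls + need h <= pl_hi p.
Proof.
move=> e [fit _ _ _ _]; move: fit; rewrite needE e.
by have := lay_end_le (pl_lo p).+1 ls; lia.
Qed.

Lemma heavy_place p v h ls : sorted_children v = h :: ls ->
  child_place p v h = Place (lay_end (pl_lo p).+1 ls) (pl_hi p) (pl_exp p).
Proof. by move=> e; rewrite /child_place e eqxx. Qed.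

Lemma light_place p v h ls c : sorted_children v = h :: ls -> c \in ls ->
  let x := (pl_lo p).+1 in let i := index c ls in
  child_place p v c = Place (lay_end x (take i ls)) (lay_end x (take i.+1 ls)) (grain k (need c)).
Proof.
move=> e c_ls; have uniq_hls := sorted_children_uniq v; rewrite e /= in uniq_hls.
have c_neq_h : c != h by apply: contraTneq c_ls => ->; case/andP: uniq_hls.
by rewrite /child_place e (negbTE c_neq_h).
Qed.

Lemma fits_child p v c : c \in children par r v -> fits p (need v) ->
  let q := child_place p v c in
  [/\ fits q (need c), pl_lo p < pl_lo q & pl_hi q <= pl_hi p].
Proof.
move=> c_v fit_v; have room h' ls' (e' : sorted_children v = h' :: ls') := heavy_room e' fit_v.
have [h [ls [e [->|[c_ls _]]]]] := sorted_children_cons c_v.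
  have le_x := lay_end_ge (pl_lo p).+1 ls; have := room _ _ e.
  case: fit_v; rewrite (heavy_place p e) /= => _ dvd_hi q_lt pow_hi hi_root room_h.
  split=> //; split=> //.
  by apply: leq_ltn_trans q_lt; rewrite leq_sub2l // leq_div2r // ltnW.
have lt_i : index c ls < size ls by rewrite index_mem.
have le_hi : pl_hi (child_place p v c) <= pl_hi p.
  rewrite (light_place p e c_ls) /=; apply: leq_trans (lay_end_take_le _ _ _) _.
  by have := room _ _ e; lia.
rewrite (light_place p e c_ls) /= lay_end_takeS // nth_index // in le_hi *.
have le_x : (pl_lo p).+1 <= lay_end (pl_lo p).+1 (take (index c ls) ls) by apply: lay_end_ge.
case: fit_v => _ _ _ _ hi_root; split=> //; split.
- exact: leq_block_end.
- exact: dvdn_block_end.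
- exact/block_end_quot_lt/need_gt0.
- exact: leq_trans (expn_grain_le k (need_gt0 c)) (leq_trans (leq_addl _ _) (leq_block_end _ _ _)).
- exact: leq_trans hi_root.
Qed.

Lemma child_place_disjoint p v c c' : c \in children par r v -> c' \in children par r v ->
  c != c' ->
  pl_hi (child_place p v c) <= pl_lo (child_place p v c') \/
  pl_hi (child_place p v c') <= pl_lo (child_place p v c).
Proof.
move=> c_v c'_v neq_cc'; have [h [ls [e hc]]] := sorted_children_cons c_v.
have [h' [ls' [e' hc']]] := sorted_children_cons c'_v.
rewrite e in e'; case: e' => <- <- in hc'.
have light_hi d : d \in ls -> pl_hi (child_place p v d) <= pl_lo (child_place p v h).
  by move=> d_ls; rewrite (light_place p e d_ls) (heavy_place p e) /= lay_end_take_le.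
case: hc hc' neq_cc' => [->|[c_ls _]] [->|[c'_ls _]] neq_cc'.
- by rewrite eqxx in neq_cc'.
- by right; apply: light_hi.
- by left; apply: light_hi.
rewrite (light_place p e c_ls) (light_place p e c'_ls) /=.
have neq_i : index c ls != index c' ls.
  by apply: contraNneq neq_cc' => eq_i; rewrite -(nth_index r c_ls) eq_i nth_index.
case: (ltngtP (index c ls) (index c' ls)) neq_i => // lt_i _.
  by left; apply: lay_end_take_mono.
by right; apply: lay_end_take_mono.
Qed.

Fixpoint placef (f : nat) (u : 'I_n) : place :=
  if f is f'.+1 then
    if u == r then root_place else child_place (placef f' (par u)) (par u) u
  else root_place.

Definition place_of (u : 'I_n) : place := placef n u.

Definition lo (u : 'I_n) : nat := pl_lo (place_of u).
Definition hi (u : 'I_n) : nat := pl_hi (place_of u).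
Definition hi_code (u : 'I_n) : nat * nat := end_code (lo u) (hi u) (pl_exp (place_of u)).

Lemma placef_stable m u : iter m par u = r -> placef m u = placef m.+1 u.
Proof.
elim: m u => [|m IH] u /=; first by move=> ->; rewrite eqxx.
by case: eqP => // _ e; congr child_place; apply: IH; rewrite -iterSr.
Qed.

Lemma place_of_root : place_of r = root_place.
Proof. by rewrite /place_of; case: n => //= n'; rewrite eqxx. Qed.

Lemma child_of_par u : u != r -> u \in children par r (par u).
Proof. by move=> ur; rewrite inE ur eqxx. Qed.

Lemma place_of_child v c : c \in children par r v ->
  place_of c = child_place (place_of v) v c.
Proof.
rewrite inE => /andP [cr /eqP <-].
by rewrite /place_of placef_stable ?iter_n_root //= (negbTE cr).
Qed.

Lemma fits_place_of u : fits (place_of u) (need u).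
Proof.
case: (reach_root u) => m; elim: m u => [|m IH] u.
  by move=> /= ->; rewrite place_of_root; apply: fits_root.
case: (eqVneq u r) => [-> _|ur]; first by rewrite place_of_root; apply: fits_root.
rewrite iterSr (place_of_child (child_of_par ur)) => /IH fit_par.
by case: (fits_child (child_of_par ur) fit_par).
Qed.

Lemma child_nest v c : c \in children par r v -> lo v < lo c /\ hi c <= hi v.
Proof.
move=> c_v; rewrite /lo /hi (place_of_child c_v).
by case: (fits_child c_v (fits_place_of v)).
Qed.

Lemma lo_lt_hi u : lo u < hi u.
Proof. by case: (fits_place_of u) => fit _ _ _ _; have := need_gt0 u; rewrite /lo /hi; lia. Qed.

Lemma children_disjoint v c c' : c \in children par r v -> c' \in children par r v ->
  c != c' -> hi c <= lo c' \/ hi c' <= lo c.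
Proof.
move=> c_v c'_v; rewrite /hi /lo (place_of_child c_v) (place_of_child c'_v).
exact: child_place_disjoint.
Qed.

Lemma lo_anc c w : anc par c w -> lo c <= lo w < hi c.
Proof.
case/ancP => j <-; have := lo_lt_hi w.
suff : lo (iter j par w) <= lo w /\ hi w <= hi (iter j par w) by lia.
elim: j => [|j [IH1 IH2]] //=.
case: (eqVneq (iter j par w) r) => [e|ne]; first by rewrite e par_root -e.
have [] := child_nest (child_of_par ne); lia.
Qed.

Lemma anc_lo u w : lo u <= lo w < hi u -> anc par u w.
Proof.
case: (reach_root u) => m; elim: m u => [|m IH] u; first by move=> /= -> _; apply: anc_root.
case: (eqVneq u r) => [-> _ _|ur]; first exact: anc_root.
rewrite iterSr => /IH anc_par_w in_u.
have [lt_lo le_hi] := child_nest (child_of_par ur).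
have /anc_par_w anc_w : lo (par u) <= lo w < hi (par u) by lia.
have neq_w : par u != w by apply: contraTneq in_u => <-; lia.
case: (anc_exists_child anc_w neq_w) => c c_par c_w.
case: (eqVneq c u) => [<- //|neq_cu].
have := lo_anc c_w; case: (children_disjoint c_par (child_of_par ur) neq_cu); lia.
Qed.

Lemma ancE u w : anc par u w = (lo u <= lo w < hi u).
Proof. by apply/idP/idP => [/lo_anc|/anc_lo]. Qed.

Definition block_code (x : nat) (c : 'I_n) : nat * nat :=
  end_code x (block_end k x (need c)) (grain k (need c)).

Fixpoint light_codes (x : nat) (l : seq 'I_n) : seq (nat * nat) :=
  if l is c :: l' then block_code x c :: light_codes (block_end k x (need c)) l' else [::].

Lemma shift_up_block_code x c : shift_up x (block_code x c) = block_end k x (need c).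
Proof.
apply: end_codeK; first exact: dvdn_block_end.
exact: leq_trans (leq_addr _ _) (leq_block_end _ _ _).
Qed.

Lemma size_light_codes x l : size (light_codes x l) = size l.
Proof. by elim: l x => //= c l IH x; rewrite IH. Qed.

Lemma intervals_end_light_codes x l : intervals_end x (light_codes x l) = lay_end x l.
Proof. by elim: l x => //= c l IH x; rewrite shift_up_block_code IH. Qed.

Lemma nth_intervals_light_codes x l i : i < size l ->
  nth (0, 0) (intervals x (light_codes x l)) i = (lay_end x (take i l), lay_end x (take i.+1 l)).
Proof.
by elim: l x i => [|c l IH] x [|i] //= lt_il; rewrite shift_up_block_code ?take0 ?IH.
Qed.

Lemma light_child_interval u h ls j : sorted_children u = h :: ls -> j < size ls ->
  nth (0, 0) (intervals (lo u).+1 (light_codes (lo u).+1 ls)) j =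
  (lo (nth r ls j), hi (nth r ls j)).
Proof.
move=> e lt_j; have uniq_hls := sorted_children_uniq u; rewrite e /= in uniq_hls.
have c_ls : nth r ls j \in ls by apply: mem_nth.
have c_u : nth r ls j \in children par r u by rewrite -mem_sorted_children e inE c_ls orbT.
rewrite nth_intervals_light_codes // /lo /hi (place_of_child c_u) (light_place _ e c_ls) /=.
by rewrite index_uniq //; case/andP: uniq_hls.
Qed.

Lemma heavy_child_interval u h ls : sorted_children u = h :: ls ->
  lo h = intervals_end (lo u).+1 (light_codes (lo u).+1 ls) /\ hi h = hi u.
Proof.
move=> e; have h_u : h \in children par r u by rewrite -mem_sorted_children e mem_head.
by rewrite intervals_end_light_codes /lo /hi (place_of_child h_u) (heavy_place _ e).
Qed.

Hypothesis log_le : up_log 2 n <= 2 ^ k.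

Definition label_width : nat := (up_log 2 n).+2.
Definition code_width : nat := k.+2.

Definition label (u : 'I_n) : seq bool :=
  encode label_width code_width (lo u) (hi_code u)
    (light_codes (lo u).+1 (behead (sorted_children u))).

Lemma root_end_le : root_end <= 2 ^ label_width.
Proof.
have le_log : trunc_log 2 (tsize r) <= trunc_log 2 n by rewrite leq_trunc_log ?tsize_le.
have le_2n : need r <= n.*2.
  rewrite -(leq_pmul2r (expn_gt0 2 k)); apply: leq_trans (need_bound r) _.
  move: two_log_le le_log (tsize_le r); rewrite -!addnn; nia.
have le_n : n <= 2 ^ up_log 2 n by apply: up_logP.
have := block_end_lt k 0 (need r); have := expn_grain_le k (need_gt0 r).
rewrite /root_end /label_width !expnS -!addnn in le_2n *; lia.
Qed.

Lemma hi_le_width u : hi u <= 2 ^ label_width.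
Proof. by case: (fits_place_of u) => _ _ _ _ /leq_trans; apply; apply: root_end_le. Qed.

Lemma code_exp_lt e : 2 ^ e <= 2 ^ label_width -> e < 2 ^ code_width.
Proof.
rewrite leq_exp2l // /label_width /code_width => le_e.
have : 0 < 2 ^ k by rewrite expn_gt0.
by move: log_le; rewrite !expnS; lia.
Qed.

Lemma light_codes_lt x l : all (fun c => need c <= 2 ^ label_width) l ->
  all (fun p => (p.1 < 2 ^ code_width) && (p.2 < 2 ^ code_width)) (light_codes x l).
Proof.
elim: l x => //= c l IH x /andP [need_c /IH ->]; rewrite andbT.
rewrite code_exp_lt ?(leq_trans (expn_grain_le k (need_gt0 c))) //=.
exact/block_end_quot_lt/need_gt0.
Qed.

Lemma decode_label u w : decode label_width code_width (label u) (label w) =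
  route (lo u) (hi_code u) (light_codes (lo u).+1 (behead (sorted_children u))) (lo w).
Proof.
have [_ _ quot_u pow_u _] := fits_place_of u.
have lo_lt u' : lo u' < 2 ^ label_width := leq_trans (lo_lt_hi u') (hi_le_width u').
have [lab_w _ _ _] := encode_fields label_width code_width (lo w) (hi_code w)
  (light_codes (lo w).+1 (behead (sorted_children w))).
rewrite /label decode_encode // ?lab_w ?bits_ofK //.
- exact: code_exp_lt (leq_trans pow_u (hi_le_width u)).
- apply: light_codes_lt; apply/allP => c c_ls.
  have c_u : c \in children par r u.
    by rewrite -mem_sorted_children; apply: mem_behead.
  have [fit_c _ _ _ _] := fits_place_of c; apply: leq_trans (hi_le_width c); rewrite /hi; lia.
Qed.

Lemma shift_up_hi_code u : shift_up (lo u) (hi_code u) = hi u.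
Proof.
apply: end_codeK (ltnW (lo_lt_hi u)).
by case: (fits_place_of u).
Qed.

Lemma decode_label_outside u w : ~~ anc par u w ->
  decode label_width code_width (label u) (label w) = 0.
Proof.
rewrite ancE decode_label => out_u.
case e: (sorted_children u) => [|h ls] /=.
  by rewrite route_heavy //= shift_up_hi_code; case: ifP => //; lia.
have [lo_h hi_h] := heavy_child_interval e.
rewrite route_heavy; last first.
  move=> j; rewrite size_light_codes => lt_j.
  have c_u : nth r ls j \in children par r u by rewrite -mem_sorted_children e inE mem_nth ?orbT.
  by rewrite (light_child_interval e lt_j) /=; have [] := child_nest c_u; lia.
have h_u : h \in children par r u by rewrite -mem_sorted_children e mem_head.
by rewrite -lo_h shift_up_hi_code; have [] := child_nest h_u; case: ifP => //; lia.
Qed.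

Lemma decode_label_child u c w : c \in children par r u -> anc par c w ->
  decode label_width code_width (label u) (label w) = port c.
Proof.
move=> c_u /lo_anc in_c; rewrite decode_label /port.
have -> : par c = u by move: c_u; rewrite inE => /andP [_ /eqP].
have [h [ls [e hc]]] := sorted_children_cons c_u; rewrite e /=.
have [lo_h hi_h] := heavy_child_interval e.
have uniq_ls : uniq ls by have := sorted_children_uniq u; rewrite e => /andP [].
have ls_u j : j < size ls -> nth r ls j \in children par r u.
  by move=> lt_j; rewrite -mem_sorted_children e inE mem_nth ?orbT.
have h_u : h \in children par r u by rewrite -mem_sorted_children e mem_head.
case: hc => [ch|[c_ls c_neq_h]].
  rewrite ch eqxx route_heavy; last first.
    move=> j; rewrite size_light_codes => lt_j; rewrite (light_child_interval e lt_j) /=.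
    have neq_h : nth r ls j != h.
      by apply: contraTneq (sorted_children_uniq u); rewrite e /= => <-; rewrite mem_nth.
    by rewrite ch in in_c; case: (children_disjoint (ls_u j lt_j) h_u neq_h); lia.
  by rewrite -lo_h shift_up_hi_code -hi_h -ch; case: ifP => //; lia.
have lt_i : index c ls < size ls by rewrite index_mem.
rewrite eq_sym (negbTE c_neq_h); apply: route_light; rewrite ?size_light_codes //.
  by rewrite (light_child_interval e lt_i) nth_index.
move=> j lt_ji; have lt_j := ltn_trans lt_ji lt_i.
rewrite (light_child_interval e lt_j) /=.
have neq_c : nth r ls j != c.
  by apply: contraTneq lt_ji => <-; rewrite index_uniq // ltnn.
by case: (children_disjoint (ls_u j lt_j) c_u neq_c); lia.
Qed.

Lemma label_decoder_correct (dec : nat -> seq bool -> seq bool -> nat) :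
  dec (up_log 2 n) =2 decode label_width code_width -> decoder_correct par r label port dec.
Proof.
move=> dec_eq u w _; rewrite dec_eq; split; first exact: decode_label_outside.
by move=> c; apply: decode_label_child.
Qed.

Lemma size_label u : size (label u) =
  label_width + code_width + code_width + (code_width + code_width) * #|children par r u|.-1.
Proof. by rewrite size_encode size_light_codes size_behead size_sorted_children. Qed.

End Tree.

Lemma trunc_log_le_up_log m : trunc_log 2 m <= up_log 2 m.
Proof.
case: m => [|m]; first by rewrite trunc_log0.
rewrite -(leq_exp2l _ _ (ltnSn 1)).
exact: leq_trans (trunc_logP (ltnSn 1) (ltn0Sn m)) (up_logP _ (ltnSn 1)).
Qed.

Lemma up_log_le_expn_up_log m : up_log 2 m <= 2 ^ (up_log 2 (up_log 2 m)).+1.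
Proof. by apply: leq_trans (up_logP _ (ltnSn 1)) _; rewrite leq_exp2l. Qed.

Lemma two_trunc_log_le m : (trunc_log 2 m).*2 <= 2 ^ (up_log 2 (up_log 2 m)).+1.
Proof.
have := trunc_log_le_up_log m; have := up_logP (up_log 2 m) (ltnSn 1).
by rewrite expnS -addnn; lia.
Qed.

Lemma size_label_le n (par : 'I_n -> 'I_n) r D u :
  0 < D -> 3 <= n -> #|children par r u| <= D ->
  size (label par r (up_log 2 (up_log 2 n)).+1 u) <=
    up_log 2 n + (2 + 8 * D) * up_log 2 (up_log 2 n).
Proof.
move=> D_gt0 n_ge3 deg_u; rewrite size_label /label_width /code_width.
have L_ge2 : 2 <= up_log 2 n.
  by have := up_logP n (ltnSn 1); case: (up_log 2 n) => [|[|m]] //=; lia.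
have : 0 < up_log 2 (up_log 2 n) by rewrite up_log_gt0 L_ge2.
have : #|children par r u|.-1 <= D.-1 by rewrite -!subn1 leq_sub2r.
by set j := up_log 2 _; set c := #|_|.-1; nia.
Qed.

Theorem mainTheorem1 (Delta : nat) (hDelta : 1 <= Delta) :
  exists (C N0 : nat)
         (enc : forall n : nat, ('I_n -> 'I_n) -> 'I_n ->
                  ('I_n -> seq bool) * ('I_n -> nat))
         (dec : nat -> seq bool -> seq bool -> nat),
    forall (n : nat) (par : 'I_n -> 'I_n) (r : 'I_n),
      is_rooted_tree par r ->
      (forall v : 'I_n, #|children par r v| <= Delta) ->
      [/\ canonical_ports par r (enc n par r).2,
          decoder_correct par r (enc n par r).1 (enc n par r).2 dec
        & N0 <= n -> forall u : 'I_n,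
            size ((enc n par r).1 u) <= up_log 2 n + C * up_log 2 (up_log 2 n)].
Proof.
exists (2 + 8 * Delta), 3.
exists (fun n par r => (label par r (up_log 2 (up_log 2 n)).+1, port par r)).
exists (fun L => decode L.+2 (up_log 2 L).+3).
move=> n par r [par_root reach_root] deg_le; split=> /=.
- exact: canonical_port.
- exact: (label_decoder_correct par_root reach_root
           (two_trunc_log_le n) (up_log_le_expn_up_log n)).
- by move=> n_ge3 u; apply: size_label_le.
Qed.
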